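(* Assume (STAB). There exist constants $\lambda_{d,R}$ ($R>2$) such that $$\langle\delta^2E(\hat y+\Pi_Ru)v,v\rangle\ge\lambda_{d,R}\|Dv\|_{\ell^2}^2\qquad\text{for all }v\in\mathscr W_0(\Lambda),$$ and $\lambda_{d,R}\to\lambda_d>0$ as $R\to\infty$.
   Context: Lattice $\Lambda:=\tfrac{a_1+a_2}{3}+\{ma_1+na_2:m,n\in\mathbb Z\}$, $a_1=(1,0)^T$, $a_2=(\tfrac12,\tfrac{\sqrt3}2)^T$; bonds $\mathcal B$ oriented nearest-neighbour pairs; cells: triangles of mutually nearest-neighbour lattice points; $C_0$ the cell with barycentre $0$. $Dy_b:=y(\eta)-y(\xi)$; $\xi_0=(0,\sqrt3/3)^T$; $\mathscr W_0(\Lambda)=\{v:v(\xi_0)=0,\mathrm{supp}(Dv)\text{ bounded}\}$; $\dot{\mathscr W}^{1,2}(\Lambda)=\{v:v(\xi_0)=0,Dv\in\ell^2(\mathcal B)\}$. $\psi\in C^4(\mathbb R)$, $1$-periodic, even; $E(y;\tilde y):=\sum_{b\in\mathcal B}[\psi(Dy_b)-\psi(D\tilde y_b)]$; $\langle\delta^2E(y)v,w\rangle:=\sum_b\psi''(Dy_b)Dv_bDw_b$. $\hat y(x)=\frac1{2\pi}\arg(x)$ (branch cut on positive $x_1$-axis). (STAB): there is $u\in\dot{\mathscr W}^{1,2}(\Lambda)$ such that $\hat y+u$ is a strongly stable equilibrium of $E$ (locally minimal among perturbations $w\in\mathscr W_0(\Lambda)$ with small $\|Dw\|_{\ell^2}$,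 and $\langle\delta^2E(\hat y+u)v,v\rangle\ge\lambda_d\|Dv\|_{\ell^2}^2$ for all $v\in\mathscr W_0(\Lambda)$, with $\lambda_d>0$ fixed). Truncation: $\eta\in C^1(\mathbb R^2)$ with $\eta=1$ on $|x|\le\frac34$, $\eta=0$ on $|x|\ge1$; $Iu$ the piecewise affine interpolant of $u$ over the cells; $A_R:=B_R(0)\setminus B_{R/2+1}(0)$; $\Pi_Ru(\xi):=\eta(\xi/R)(u(\xi)-a_R)$ with $a_R$ the average of $Iu$ over $A_R$. *)

From Stdlib Require Import Reals Lra ZArith ClassicalEpsilon.
Open Scope R_scope.

(* Limit of a real sequence (0 if it does not converge). *)
Definition Lim (u : nat -> R) : R :=
  match excluded_middle_informative (exists l, Un_cv u l) with
  | left H => proj1_sig (constructive_indefinite_description _ H)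
  | right _ => 0
  end.

(* Riemann integral of f over [a,b] (0 if f is not Riemann integrable). *)
Definition RInt (f : R -> R) (a b : R) : R :=
  match excluded_middle_informative
          (exists pr : Riemann_integrable f a b, True) with
  | left H => RiemannInt (proj1_sig (constructive_indefinite_description _ H))
  | right _ => 0
  end.

Definition norm2 (x1 x2 : R) : R := sqrt (x1 * x1 + x2 * x2).

(* Site (m,n) : Z*Z is the point (a1+a2)/3 + m a1 + n a2,
   a1 = (1,0), a2 = (1/2, sqrt3/2). *)
Definition posx (m n : Z) : R := / 2 + IZR m + IZR n / 2.
Definition posy (m n : Z) : R := sqrt 3 / 6 + IZR n * (sqrt 3 / 2).

Definition LFun := Z -> Z -> R.

(* the six nearest-neighbour directions (oriented bonds (xi, xi + dir k)) *)
Definition dirm (k : nat) : Z :=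
  match k with O => 1%Z | 1%nat => 0%Z | 2%nat => (-1)%Z | 3%nat => (-1)%Z | 4%nat => 0%Z | _ => 1%Z end.
Definition dirn (k : nat) : Z :=
  match k with O => 0%Z | 1%nat => 1%Z | 2%nat => 1%Z | 3%nat => 0%Z | 4%nat => (-1)%Z | _ => (-1)%Z end.

Definition Dif (y : LFun) (m n : Z) (k : nat) : R :=
  y (m + dirm k)%Z (n + dirn k)%Z - y m n.

Definition box_sum (g : Z -> Z -> R) (N : nat) : R :=
  sum_f_R0 (fun i =>
    sum_f_R0 (fun j => g (Z.of_nat i - Z.of_nat N)%Z (Z.of_nat j - Z.of_nat N)%Z)
      (2 * N)) (2 * N).

Definition bond_box_sum (f : Z -> Z -> nat -> R) (N : nat) : R :=
  box_sum (fun m n => sum_f_R0 (fun k => f m n k) 5) N.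
Definition bsum (f : Z -> Z -> nat -> R) : R := Lim (bond_box_sum f).

Definition Dnorm2 (v : LFun) : R := bsum (fun m n k => Dif v m n k ^ 2).

(* xi_0 = (0, -sqrt3/3) = site (0,-1) *)
Definition xi0m : Z := 0%Z.
Definition xi0n : Z := (-1)%Z.

Definition in_W0 (v : LFun) : Prop :=
  v xi0m xi0n = 0 /\
  exists N : Z, forall m n k, (k <= 5)%nat ->
    (N < Z.abs m \/ N < Z.abs n)%Z -> Dif v m n k = 0.

Definition in_W12 (v : LFun) : Prop :=
  v xi0m xi0n = 0 /\ exists l, Un_cv (bond_box_sum (fun m n k => Dif v m n k ^ 2)) l.

Definition Ediff (psi : R -> R) (y yt : LFun) : R :=
  bsum (fun m n k => psi (Dif y m n k) - psi (Dif yt m n k)).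
Definition hess (psi2 : R -> R) (y v w : LFun) : R :=
  bsum (fun m n k => psi2 (Dif y m n k) * Dif v m n k * Dif w m n k).

(* arg x in [0, 2 pi), branch cut on the positive x1-axis *)
Definition argR (x1 x2 : R) : R :=
  if Rle_dec 0 x2 then acos (x1 / norm2 x1 x2)
  else 2 * PI - acos (x1 / norm2 x1 x2).
Definition yhat (x1 x2 : R) : R := argR x1 x2 / (2 * PI).
Definition yhat_lat : LFun := fun m n => yhat (posx m n) (posy m n).

Definition floorR (x : R) : Z := Int_part x.

(* piecewise affine interpolant of u over the triangular cells *)
Definition interp (u : LFun) (x1 x2 : R) : R :=
  let t := (x2 - sqrt 3 / 6) / (sqrt 3 / 2) in
  let s := x1 - / 2 - t / 2 in
  let m := floorR s in
  let n := floorR t in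
  let fs := s - IZR m in
  let ft := t - IZR n in
  if Rle_dec (fs + ft) 1 then
    u m n + fs * (u (m + 1)%Z n - u m n) + ft * (u m (n + 1)%Z - u m n)
  else
    u (m + 1)%Z (n + 1)%Z
    + (1 - fs) * (u m (n + 1)%Z - u (m + 1)%Z (n + 1)%Z)
    + (1 - ft) * (u (m + 1)%Z n - u (m + 1)%Z (n + 1)%Z).

Definition indA (R0 x1 x2 : R) : R :=
  if Rlt_dec (norm2 x1 x2) R0 then
    if Rle_dec (R0 / 2 + 1) (norm2 x1 x2) then 1 else 0
  else 0.

Definition aR (u : LFun) (R0 : R) : R :=
  RInt (fun x1 => RInt (fun x2 => indA R0 x1 x2 * interp u x1 x2) (- R0) R0)
       (- R0) R0
  / (PI * (R0 ^ 2 - (R0 / 2 + 1) ^ 2)).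

Definition PiR (eta : R -> R -> R) (u : LFun) (R0 : R) : LFun :=
  fun m n => eta (posx m n / R0) (posy m n / R0) * (u m n - aR u R0).

Definition cont2 (f : R -> R -> R) : Prop :=
  forall x1 x2 eps, 0 < eps -> exists del, 0 < del /\
    forall z1 z2, norm2 (z1 - x1) (z2 - x2) < del ->
      Rabs (f z1 z2 - f x1 x2) < eps.
Definition C1_2 (f : R -> R -> R) : Prop :=
  exists d1 d2 : R -> R -> R,
    (forall x1 x2, derivable_pt_lim (fun t => f t x2) x1 (d1 x1 x2)) /\
    (forall x1 x2, derivable_pt_lim (fun t => f x1 t) x2 (d2 x1 x2)) /\
    cont2 d1 /\ cont2 d2.

Definition add_lf (y z : LFun) : LFun := fun m n => y m n + z m n.

From Stdlib Require Import Reals ZArith Lra Lia ClassicalEpsilon.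
From Coquelicot Require Continuity.
Open Scope R_scope.

(* Since psi is C^4 and 1-periodic, psi'' is globally Lipschitz, with constant K say.  Hence
   replacing u by Pi_R u moves the Hessian by at most K delta_R ||Dv||^2, where delta_R is the
   supremum over all bonds of |D(Pi_R u - u)|, and lambda_{d,R} := lambda_d - K delta_R works.
   It remains to see that delta_R -> 0.  On a bond (xi, xi'),
     D(Pi_R u - u) = (eta(xi/R) - 1) Du + (eta(xi'/R) - eta(xi/R)) (u(xi') - a_R).
   The first term lives on |xi| > 3R/4, where Du is uniformly small because Du is in l^2.  The
   second is O(1/R) times |u(xi')| + |a_R| with |xi'| <= R + 5/2; finite energy forces u, hence
   its interpolant and the average a_R, to grow sublinearly, so this term is small as well. *)

Definition zsum (h : Z -> R) (N : nat) : R :=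
  sum_f_R0 (fun i => h (Z.of_nat i - Z.of_nat N)%Z) (2 * N).

Lemma zsum_S h N :
  zsum h (S N) = h (- Z.of_nat (S N))%Z + zsum h N + h (Z.of_nat (S N)).
Proof.
  unfold zsum.
  replace (2 * S N)%nat with (S (S (2 * N))) by lia.
  rewrite tech5, decomp_sum by lia; simpl pred.
  rewrite (sum_eq _ (fun i => h (Z.of_nat i - Z.of_nat N)%Z))
    by (intros i _; f_equal; lia).
  replace (Z.of_nat 0 - Z.of_nat (S N))%Z with (- Z.of_nat (S N))%Z by lia.
  replace (Z.of_nat (S (S (2 * N))) - Z.of_nat (S N))%Z with (Z.of_nat (S N)) by lia.
  reflexivity.
Qed.

Lemma zsum_ext h1 h2 N :
  (forall z, (Z.abs z <= Z.of_nat N)%Z -> h1 z = h2 z) -> zsum h1 N = zsum h2 N.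
Proof. intros H; unfold zsum; apply sum_eq; intros i Hi; apply H; lia. Qed.

Lemma zsum_le h1 h2 N :
  (forall z, (Z.abs z <= Z.of_nat N)%Z -> h1 z <= h2 z) -> zsum h1 N <= zsum h2 N.
Proof. intros H; unfold zsum; apply sum_Rle; intros i Hi; apply H; lia. Qed.

Lemma zsum_minus_scal h1 h2 c N :
  zsum (fun z => h1 z - c * h2 z) N = zsum h1 N - c * zsum h2 N.
Proof.
  unfold zsum; rewrite scal_sum, minus_sum.
  f_equal; apply sum_eq; intros; ring.
Qed.

Lemma zsum_nonneg h N : (forall z, 0 <= h z) -> 0 <= zsum h N.
Proof. intros H; unfold zsum; apply cond_pos_sum; intros; apply H. Qed.

Lemma zsum_stable h N :
  (forall z, (Z.of_nat N < Z.abs z)%Z -> h z = 0) ->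
  forall M, (N <= M)%nat -> zsum h M = zsum h N.
Proof.
  intros H M HM; induction HM as [|M HM IH]; [reflexivity|].
  rewrite zsum_S, IH, !H by lia; ring.
Qed.

Lemma zsum_le_S h N : (forall z, 0 <= h z) -> zsum h N <= zsum h (S N).
Proof.
  intros H; rewrite zsum_S.
  pose proof (H (- Z.of_nat (S N))%Z); pose proof (H (Z.of_nat (S N))); lra.
Qed.

Lemma zsum_term_le h N z :
  (forall z, 0 <= h z) -> (Z.abs z <= Z.of_nat N)%Z -> h z <= zsum h N.
Proof.
  intros H; induction N as [|N IH]; intros Hz.
  - unfold zsum; simpl; replace z with 0%Z by lia; lra.
  - destruct (Z.eq_dec (Z.abs z) (Z.of_nat (S N))) as [E|E].
    + rewrite zsum_S; pose proof (zsum_nonneg h N H).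
      pose proof (H (- Z.of_nat (S N))%Z); pose proof (H (Z.of_nat (S N))).
      destruct (Z.abs_spec z) as [[? ?]|[? ?]];
        [replace z with (Z.of_nat (S N)) by lia | replace z with (- Z.of_nat (S N))%Z by lia];
        lra.
    + pose proof (IH ltac:(lia)); pose proof (zsum_le_S h N H); lra.
Qed.

Lemma sum_f_R0_term_le (f : nat -> R) n k :
  (forall i, 0 <= f i) -> (k <= n)%nat -> f k <= sum_f_R0 f n.
Proof.
  intros H; induction n as [|n IH]; intros Hk.
  - replace k with 0%nat by lia; simpl; lra.
  - rewrite tech5; pose proof (H (S n)).
    destruct (Nat.eq_dec k (S n)) as [->|].
    + pose proof (cond_pos_sum f n H); lra.
    + pose proof (IH ltac:(lia)); lra.
Qed.

Lemma sum_f_R0_zero n : sum_f_R0 (fun _ => 0) n = 0.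
Proof. induction n as [|n IH]; simpl; rewrite ?IH; lra. Qed.

Definition outside (N : nat) (m n : Z) : Prop :=
  (Z.of_nat N < Z.abs m \/ Z.of_nat N < Z.abs n)%Z.

Lemma bond_box_sumE f N :
  bond_box_sum f N = zsum (fun m => zsum (fun n => sum_f_R0 (fun k => f m n k) 5) N) N.
Proof. reflexivity. Qed.

Lemma bond_box_sum_ext f g N :
  (forall m n k, (k <= 5)%nat -> ~ outside N m n -> f m n k = g m n k) ->
  bond_box_sum f N = bond_box_sum g N.
Proof.
  intros H; rewrite !bond_box_sumE.
  apply zsum_ext; intros; apply zsum_ext; intros; apply sum_eq; intros.
  apply H; [lia | unfold outside; lia].
Qed.

Lemma bond_box_sum_le f g N :
  (forall m n k, (k <= 5)%nat -> f m n k <= g m n k) ->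
  bond_box_sum f N <= bond_box_sum g N.
Proof.
  intros H; rewrite !bond_box_sumE.
  apply zsum_le; intros; apply zsum_le; intros; apply sum_Rle; intros; apply H; lia.
Qed.

Lemma bond_box_sum_minus_scal f g c N :
  bond_box_sum (fun m n k => f m n k - c * g m n k) N =
  bond_box_sum f N - c * bond_box_sum g N.
Proof.
  rewrite !bond_box_sumE, <- zsum_minus_scal; apply zsum_ext; intros.
  rewrite <- zsum_minus_scal; apply zsum_ext; intros.
  rewrite scal_sum, minus_sum; f_equal; apply sum_eq; intros; ring.
Qed.

Lemma bond_box_sum_stable f N :
  (forall m n k, (k <= 5)%nat -> outside N m n -> f m n k = 0) ->
  forall M, (N <= M)%nat -> bond_box_sum f M = bond_box_sum f N.
Proof.
  intros H M HM.
  assert (Hrow : forall m, ~ (Z.abs m <= Z.of_nat N)%Z -> forall L,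
    zsum (fun n => sum_f_R0 (fun k => f m n k) 5) L = 0).
  { intros m Hm L; unfold zsum; rewrite <- (sum_f_R0_zero (2 * L)).
    apply sum_eq; intros; rewrite <- (sum_f_R0_zero 5).
    apply sum_eq; intros; apply H; [lia | unfold outside; lia]. }
  rewrite !bond_box_sumE.
  transitivity (zsum (fun m => zsum (fun n => sum_f_R0 (fun k => f m n k) 5) N) M).
  - apply zsum_ext; intros; apply zsum_stable; auto; intros.
    rewrite <- (sum_f_R0_zero 5); apply sum_eq; intros; apply H; [lia | unfold outside; lia].
  - apply zsum_stable; auto; intros; apply Hrow; lia.
Qed.

Lemma bond_box_sum_le_S f N :
  (forall m n k, 0 <= f m n k) -> bond_box_sum f N <= bond_box_sum f (S N).
Proof.
  intros H; rewrite !bond_box_sumE.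
  assert (Hs : forall m n, 0 <= sum_f_R0 (fun k => f m n k) 5)
    by (intros; apply cond_pos_sum; auto).
  apply Rle_trans with (zsum (fun m => zsum (fun n => sum_f_R0 (fun k => f m n k) 5) N) (S N)).
  - apply zsum_le_S; intros; apply zsum_nonneg; auto.
  - apply zsum_le; intros; apply zsum_le_S; auto.
Qed.

Lemma bond_box_sum_term_le f N m n k :
  (forall m n k, 0 <= f m n k) -> (k <= 5)%nat ->
  (Z.abs m <= Z.of_nat N)%Z -> (Z.abs n <= Z.of_nat N)%Z ->
  f m n k <= bond_box_sum f N.
Proof.
  intros H Hk Hm Hn; rewrite bond_box_sumE.
  assert (Hs : forall m n, 0 <= sum_f_R0 (fun k => f m n k) 5)
    by (intros; apply cond_pos_sum; auto).
  eapply Rle_trans; [|apply zsum_term_le; [intros; apply zsum_nonneg; auto | exact Hm]].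
  eapply Rle_trans; [|apply zsum_term_le; [auto | exact Hn]].
  apply (sum_f_R0_term_le (fun k => f m n k)); auto.
Qed.

Lemma Lim_unique u l : Un_cv u l -> Lim u = l.
Proof.
  intros H; unfold Lim; destruct excluded_middle_informative as [e|n].
  - destruct constructive_indefinite_description as [l' Hl']; simpl.
    eapply UL_sequence; eauto.
  - exfalso; eauto.
Qed.

Lemma bsum_finite_support f N :
  (forall m n k, (k <= 5)%nat -> outside N m n -> f m n k = 0) ->
  bsum f = bond_box_sum f N.
Proof.
  intros H; unfold bsum; apply Lim_unique; intros e He; exists N; intros M HM.
  rewrite (bond_box_sum_stable f N H M) by lia.
  unfold R_dist; rewrite Rminus_diag, Rabs_R0; lra.
Qed.

Lemma bond_box_sum_add_outside_le f N M m n k :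
  (forall m n k, 0 <= f m n k) -> (k <= 5)%nat -> (N <= M)%nat -> outside N m n ->
  (Z.abs m <= Z.of_nat M)%Z -> (Z.abs n <= Z.of_nat M)%Z ->
  bond_box_sum f N + f m n k <= bond_box_sum f M.
Proof.
  intros Hf Hk HNM Ho Hm Hn.
  set (fin := fun m n k => if excluded_middle_informative (outside N m n) then 0 else f m n k).
  set (fout := fun m n k => if excluded_middle_informative (outside N m n) then f m n k else 0).
  assert (Split : bond_box_sum f M = bond_box_sum fin M - (-1) * bond_box_sum fout M).
  { rewrite <- bond_box_sum_minus_scal; apply bond_box_sum_ext; intros.
    unfold fin, fout; destruct excluded_middle_informative; ring. }
  assert (Inside : bond_box_sum fin M = bond_box_sum f N).
  { rewrite (bond_box_sum_stable fin N) by
      (auto; intros; unfold fin; destruct excluded_middle_informative; tauto).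
    apply bond_box_sum_ext; intros; unfold fin; destruct excluded_middle_informative; tauto. }
  assert (Term : f m n k <= bond_box_sum fout M).
  { replace (f m n k) with (fout m n k)
      by (unfold fout; destruct excluded_middle_informative; tauto).
    apply bond_box_sum_term_le; auto.
    intros; unfold fout; destruct excluded_middle_informative; [apply Hf | lra]. }
  lra.
Qed.

Lemma Rabs_le_sqrt x c : x ^ 2 <= c -> Rabs x <= sqrt c.
Proof. intros H; rewrite <- sqrt_Rsqr_abs; apply sqrt_le_1_alt; unfold Rsqr; lra. Qed.

Lemma Rabs_le_between x a : Rabs x <= a -> - a <= x <= a.
Proof.
  intros H; pose proof (Rle_abs x); pose proof (Rle_abs (- x)); rewrite Rabs_Ropp in *; lra.
Qed.

Section FiniteEnergy.

Variables (u : LFun) (l : R).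
Hypothesis Hl : Un_cv (bond_box_sum (fun m n k => Dif u m n k ^ 2)) l.

Lemma energy_box_le N : bond_box_sum (fun m n k => Dif u m n k ^ 2) N <= l.
Proof.
  apply growing_ineq; [|exact Hl].
  intros M; apply bond_box_sum_le_S; intros; apply pow2_ge_0.
Qed.

Lemma Dif_bound m n k : (k <= 5)%nat -> Rabs (Dif u m n k) <= sqrt l.
Proof.
  intros Hk; apply Rabs_le_sqrt.
  eapply Rle_trans; [|apply (energy_box_le (Z.to_nat (Z.max (Z.abs m) (Z.abs n))))].
  apply (bond_box_sum_term_le (fun m n k => Dif u m n k ^ 2));
    auto; [intros; apply pow2_ge_0 | lia | lia].
Qed.

Lemma Dif_tail e : 0 < e -> exists N : nat, forall m n k, (k <= 5)%nat -> outside N m n ->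
  Rabs (Dif u m n k) <= e.
Proof.
  intros He; destruct (Hl (e ^ 2)) as [N HN]; [nra|].
  exists N; intros m n k Hk Ho.
  rewrite <- (sqrt_pow2 e) by lra; apply Rabs_le_sqrt.
  pose proof (bond_box_sum_add_outside_le (fun m n k => Dif u m n k ^ 2) N
    (Nat.max N (Z.to_nat (Z.max (Z.abs m) (Z.abs n)))) m n k
    ltac:(intros; apply pow2_ge_0) Hk ltac:(lia) Ho ltac:(lia) ltac:(lia)).
  pose proof (energy_box_le (Nat.max N (Z.to_nat (Z.max (Z.abs m) (Z.abs n))))).
  specialize (HN N (le_n N)); unfold R_dist in HN; apply Rabs_def2 in HN.
  simpl in *; lra.
Qed.

End FiniteEnergy.

Lemma telescope_bound (g : nat -> R) P A e :
  0 <= A -> 0 <= e ->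
  (forall j, (j <= P)%nat -> Rabs (g (S j) - g j) <= A) ->
  (forall j, (P < j)%nat -> Rabs (g (S j) - g j) <= e) ->
  forall j, Rabs (g j - g 0%nat) <= A * INR (S P) + e * INR j.
Proof.
  intros HA He Hin Hout.
  assert (Hmin : forall j, Rabs (g j - g 0%nat) <= A * INR (Nat.min j (S P)) + e * INR j).
  { induction j as [|j IH].
    - simpl; rewrite Rminus_diag, Rabs_R0; lra.
    - replace (g (S j) - g 0%nat) with ((g (S j) - g j) + (g j - g 0%nat)) by ring.
      eapply Rle_trans; [apply Rabs_triang|]; rewrite S_INR.
      destruct (le_lt_dec j P) as [Hj|Hj].
      + replace (Nat.min (S j) (S P)) with (S (Nat.min j (S P))) by lia.
        rewrite S_INR; specialize (Hin j Hj); lra.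
      + replace (Nat.min (S j) (S P)) with (Nat.min j (S P)) by lia.
        specialize (Hout j Hj); lra. }
  intros j; eapply Rle_trans; [apply Hmin|].
  assert (INR (Nat.min j (S P)) <= INR (S P)) by (apply le_INR; lia); nra.
Qed.

Lemma INR_Z_to_nat_le z b : (z <= Z.abs b)%Z -> INR (Z.to_nat z) <= Rabs (IZR b).
Proof. intros H; rewrite <- abs_IZR, INR_IZR_INZ; apply IZR_le; lia. Qed.

Section SublinearGrowth.

Variables (u : LFun) (l e : R) (N : nat).
Hypothesis Hl : Un_cv (bond_box_sum (fun m n k => Dif u m n k ^ 2)) l.
Hypothesis He : 0 <= e.
Hypothesis HN : forall m n k, (k <= 5)%nat -> outside N m n -> Rabs (Dif u m n k) <= e.

Lemma lattice_walk_bound k m0 n0 j m1 n1 : (k <= 5)%nat ->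
  (forall i, (S N < i)%nat -> outside N (m0 + Z.of_nat i * dirm k) (n0 + Z.of_nat i * dirn k)) ->
  m1 = (m0 + Z.of_nat j * dirm k)%Z -> n1 = (n0 + Z.of_nat j * dirn k)%Z ->
  Rabs (u m1 n1 - u m0 n0) <= sqrt l * INR (S (S N)) + e * INR j.
Proof.
  intros Hk Hwalk -> ->.
  set (g := fun i => u (m0 + Z.of_nat i * dirm k)%Z (n0 + Z.of_nat i * dirn k)%Z).
  assert (Hstep : forall i,
    g (S i) - g i = Dif u (m0 + Z.of_nat i * dirm k) (n0 + Z.of_nat i * dirn k) k)
    by (intros i; unfold g, Dif; f_equal; f_equal; rewrite Nat2Z.inj_succ; ring).
  assert (Hg0 : g 0%nat = u m0 n0) by (unfold g; simpl; rewrite !Z.add_0_r; reflexivity).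
  rewrite <- Hg0; apply (telescope_bound g (S N)); auto using sqrt_pos.
  - intros i _; rewrite Hstep; apply (Dif_bound u l Hl); auto.
  - intros i Hi; rewrite Hstep; apply HN, Hwalk; auto; lia.
Qed.

Lemma row_growth m :
  Rabs (u m (-1)%Z - u 0%Z (-1)%Z) <= sqrt l * INR (S (S N)) + e * Rabs (IZR m).
Proof.
  destruct (Z_le_gt_dec 0 m).
  - pose proof (lattice_walk_bound 0 0 (-1) (Z.to_nat m) m (-1) ltac:(lia)
      ltac:(intros i Hi; unfold outside; cbn [dirm dirn]; lia)
      ltac:(cbn [dirm dirn]; lia) ltac:(cbn [dirm dirn]; lia)).
    pose proof (INR_Z_to_nat_le m m ltac:(lia)); nra.
  - pose proof (lattice_walk_bound 3 0 (-1) (Z.to_nat (- m)) m (-1) ltac:(lia)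
      ltac:(intros i Hi; unfold outside; cbn [dirm dirn]; lia)
      ltac:(cbn [dirm dirn]; lia) ltac:(cbn [dirm dirn]; lia)).
    pose proof (INR_Z_to_nat_le (- m) m ltac:(lia)); nra.
Qed.

Lemma column_growth m n :
  Rabs (u m n - u m (-1)%Z) <= sqrt l * INR (S (S N)) + e * Rabs (IZR (n + 1)).
Proof.
  destruct (Z_le_gt_dec (-1) n).
  - pose proof (lattice_walk_bound 1 m (-1) (Z.to_nat (n + 1)) m n ltac:(lia)
      ltac:(intros i Hi; unfold outside; cbn [dirm dirn]; lia)
      ltac:(cbn [dirm dirn]; lia) ltac:(cbn [dirm dirn]; lia)).
    pose proof (INR_Z_to_nat_le (n + 1) (n + 1) ltac:(lia)); nra.
  - pose proof (lattice_walk_bound 4 m (-1) (Z.to_nat (- n - 1)) m n ltac:(lia)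
      ltac:(intros i Hi; unfold outside; cbn [dirm dirn]; lia)
      ltac:(cbn [dirm dirn]; lia) ltac:(cbn [dirm dirn]; lia)).
    pose proof (INR_Z_to_nat_le (- n - 1) (n + 1) ltac:(lia)); nra.
Qed.

End SublinearGrowth.

Lemma sublinear_growth (u : LFun) l :
  u 0%Z (-1)%Z = 0 -> Un_cv (bond_box_sum (fun m n k => Dif u m n k ^ 2)) l ->
  forall e, 0 < e -> exists C, 0 <= C /\ forall m n,
    Rabs (u m n) <= C + e * (Rabs (IZR m) + Rabs (IZR n) + 1).
Proof.
  intros Hu0 Hl e He.
  destruct (Dif_tail u l Hl e He) as [N HN].
  exists (2 * (sqrt l * INR (S (S N)))); split.
  { pose proof (sqrt_pos l); pose proof (pos_INR (S (S N))); nra. }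
  intros m n.
  pose proof (row_growth u l e N Hl (Rlt_le _ _ He) HN m) as Row.
  pose proof (column_growth u l e N Hl (Rlt_le _ _ He) HN m n) as Col.
  assert (Hn1 : Rabs (IZR (n + 1)) <= Rabs (IZR n) + 1)
    by (rewrite plus_IZR; eapply Rle_trans; [apply Rabs_triang | rewrite Rabs_R1; lra]).
  rewrite Hu0, Rminus_0_r in Row.
  replace (u m n) with ((u m n - u m (-1)%Z) + u m (-1)%Z) by ring.
  eapply Rle_trans; [apply Rabs_triang|]; nra.
Qed.

Lemma lipschitz_of_bounded_derivative (f f' : R -> R) B :
  (forall x, derivable_pt_lim f x (f' x)) -> (forall x, Rabs (f' x) <= B) ->
  forall a b, Rabs (f b - f a) <= B * Rabs (b - a).
Proof.
  intros Hd HB a b; destruct (MVT_abs f f' a b (fun c _ => Hd c)) as [c [-> _]].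
  apply Rmult_le_compat_r; [apply Rabs_pos | apply HB].
Qed.

Section Periodic.

Variable f : R -> R.
Hypothesis Hper : forall x, f (x + 1) = f x.

Lemma derivative_periodic f' :
  (forall x, derivable_pt_lim f x (f' x)) -> forall x, f' (x + 1) = f' x.
Proof.
  intros Hd x; apply (uniqueness_limite f x); [|apply Hd].
  intros eps Heps; destruct (Hd (x + 1) eps Heps) as [del Hdel].
  exists del; intros h Hh0 Hh; specialize (Hdel h Hh0 Hh).
  replace (x + 1 + h) with ((x + h) + 1) in Hdel by ring.
  rewrite !Hper in Hdel; exact Hdel.
Qed.

Lemma periodic_INR n x : f (x + INR n) = f x.
Proof.
  induction n as [|n IH]; [simpl; rewrite Rplus_0_r; reflexivity|].
  rewrite S_INR, <- Rplus_assoc, Hper; exact IH.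
Qed.

Lemma periodic_IZR k x : f (x + IZR k) = f x.
Proof.
  destruct (Z_le_gt_dec 0 k).
  - rewrite <- (Z2Nat.id k), <- INR_IZR_INZ by lia; apply periodic_INR.
  - rewrite <- (periodic_INR (Z.to_nat (- k))), INR_IZR_INZ, Z2Nat.id, opp_IZR by lia.
    f_equal; ring.
Qed.

Lemma periodic_continuous_bounded :
  (forall x, continuity_pt f x) -> exists B, forall x, Rabs (f x) <= B.
Proof.
  intros Hc.
  destruct (continuity_ab_maj (fun x => Rabs (f x)) 0 1 ltac:(lra)) as [M [HM _]].
  { intros c _; apply (continuity_pt_comp f Rabs); [apply Hc | apply Rcontinuity_abs]. }
  exists (Rabs (f M)); intros x.
  rewrite (Rplus_Int_part_frac_part x), Rplus_comm, periodic_IZR.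
  apply HM; pose proof (base_Int_part x); unfold frac_part; lra.
Qed.

End Periodic.

Lemma periodic_second_derivative_lipschitz (f f1 f2 f3 : R -> R) :
  (forall x, f (x + 1) = f x) ->
  (forall x, derivable_pt_lim f x (f1 x)) ->
  (forall x, derivable_pt_lim f1 x (f2 x)) ->
  (forall x, derivable_pt_lim f2 x (f3 x)) ->
  (forall x, continuity_pt f3 x) ->
  exists K, 0 <= K /\ forall a b, Rabs (f2 b - f2 a) <= K * Rabs (b - a).
Proof.
  intros Hper Hd1 Hd2 Hd3 Hc3.
  pose proof (derivative_periodic _ (derivative_periodic _
    (derivative_periodic _ Hper _ Hd1) _ Hd2) _ Hd3) as Hper3.
  destruct (periodic_continuous_bounded f3 Hper3 Hc3) as [B HB].
  exists B; split; [pose proof (HB 0); pose proof (Rabs_pos (f3 0)); lra|].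
  exact (lipschitz_of_bounded_derivative f2 f3 B Hd3 HB).
Qed.

Lemma norm2_nonneg x y : 0 <= norm2 x y.
Proof. apply sqrt_pos. Qed.

Lemma norm2_sym x y : norm2 x y = norm2 y x.
Proof. unfold norm2; f_equal; ring. Qed.

Lemma Rabs_le_norm2_l x y : Rabs x <= norm2 x y.
Proof. rewrite <- sqrt_Rsqr_abs; apply sqrt_le_1_alt; unfold Rsqr; nra. Qed.

Lemma Rabs_le_norm2_r x y : Rabs y <= norm2 x y.
Proof. rewrite norm2_sym; apply Rabs_le_norm2_l. Qed.

Lemma sqrt_le_of_sq x y : 0 <= y -> x <= y ^ 2 -> sqrt x <= y.
Proof. intros Hy H; rewrite <- (sqrt_pow2 y Hy); apply sqrt_le_1_alt, H. Qed.

Lemma norm2_le_sum x y : norm2 x y <= Rabs x + Rabs y.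
Proof.
  pose proof (Rabs_pos x); pose proof (Rabs_pos y).
  apply sqrt_le_of_sq; [lra|].
  pose proof (Rsqr_abs x); pose proof (Rsqr_abs y); unfold Rsqr in *; nra.
Qed.

Lemma norm2_triangle a b c d : norm2 a b <= norm2 c d + Rabs (a - c) + Rabs (b - d).
Proof.
  pose proof (Rabs_pos (a - c)); pose proof (Rabs_pos (b - d)); pose proof (norm2_nonneg c d).
  apply sqrt_le_of_sq; [lra|].
  assert (Hs : norm2 c d ^ 2 = c * c + d * d) by (unfold norm2; rewrite pow2_sqrt; nra).
  assert (Hc : c * (a - c) <= norm2 c d * Rabs (a - c)).
  { eapply Rle_trans; [apply Rle_abs|]; rewrite Rabs_mult.
    apply Rmult_le_compat_r; [lra | apply Rabs_le_norm2_l]. }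
  assert (Hd : d * (b - d) <= norm2 c d * Rabs (b - d)).
  { eapply Rle_trans; [apply Rle_abs|]; rewrite Rabs_mult.
    apply Rmult_le_compat_r; [lra | apply Rabs_le_norm2_r]. }
  pose proof (Rsqr_abs (a - c)); pose proof (Rsqr_abs (b - d)); unfold Rsqr in *; nra.
Qed.

Lemma norm2_scale x y c : 0 < c -> norm2 (x / c) (y / c) = norm2 x y / c.
Proof.
  intros Hc; unfold norm2.
  replace (x / c * (x / c) + y / c * (y / c)) with ((x * x + y * y) / (c * c)) by (field; lra).
  rewrite sqrt_div_alt, sqrt_square by nra; reflexivity.
Qed.

Lemma cont2_continuity_2d_pt f x y : cont2 f -> Continuity.continuity_2d_pt f x y.
Proof.
  intros Hc eps; destruct (Hc x y eps (cond_pos eps)) as [del [Hdel H]].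
  exists (mkposreal (del / 2) ltac:(lra)); simpl; intros u v Hu Hv.
  apply H; pose proof (norm2_le_sum (u - x) (v - y)); lra.
Qed.

Lemma continuous_bounded_square (f : R -> R -> R) a : 0 < a ->
  (forall x y, Rabs x <= a -> Rabs y <= a -> Continuity.continuity_2d_pt f x y) ->
  exists B, forall x y, Rabs x <= a -> Rabs y <= a -> Rabs (f x y) <= B.
Proof.
  intros Ha Hc.
  destruct (Continuity.uniform_continuity_2d f (- a) a (- a) a
    ltac:(intros x y Hx Hy; apply Hc; apply Rabs_le; lra) (mkposreal 1 Rlt_0_1)) as [[d Hd] Hunif].
  simpl in Hunif.
  destruct (INR_unbounded (a / d)) as [K HK].
  exists (Rabs (f 0 0) + INR K); intros x y Hx Hy.
  assert (HKd : a < d * INR K) by (apply Rmult_lt_reg_r with (/ d);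
    [apply Rinv_0_lt_compat; lra | field_simplify; lra]).
  assert (HK0 : 0 < INR K) by nra.
  assert (Step : forall j, (j <= K)%nat ->
    Rabs (f (INR j / INR K * x) (INR j / INR K * y)) <= Rabs (f 0 0) + INR j).
  { induction j as [|j IH]; intros Hj.
    - simpl; unfold Rdiv; rewrite !Rmult_0_l; lra.
    - assert (Hq : 0 <= INR j / INR K <= 1 /\ 0 <= INR (S j) / INR K <= 1).
      { pose proof (le_INR j K ltac:(lia)); pose proof (le_INR (S j) K Hj); pose proof (pos_INR j).
        rewrite S_INR in *; split; split; apply Rmult_le_reg_r with (INR K); field_simplify; lra. }
      assert (In : forall q z, 0 <= q <= 1 -> Rabs z <= a -> - a <= q * z <= a).
      { intros q z Hqz Hz; apply Rabs_le_between; rewrite Rabs_mult, Rabs_right by lra; nra. }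
      assert (Small : forall z, Rabs z <= a ->
        Rabs (INR (S j) / INR K * z - INR j / INR K * z) < d).
      { intros z Hz; replace (INR (S j) / INR K * z - INR j / INR K * z) with (z / INR K)
          by (rewrite S_INR; field; lra).
        unfold Rdiv; rewrite Rabs_mult, (Rabs_right (/ INR K))
          by (left; apply Rinv_0_lt_compat; lra).
        apply Rmult_lt_reg_r with (INR K); [lra|]; rewrite Rmult_assoc, Rinv_l by lra; nra. }
      destruct Hq as [Hq Hq'].
      pose proof (Hunif _ _ _ _ (In _ _ Hq Hx) (In _ _ Hq Hy) (In _ _ Hq' Hx) (In _ _ Hq' Hy)
        (Small x Hx) (Small y Hy)) as U.
      pose proof (IH ltac:(lia)); pose proof (Rabs_triang_inv
        (f (INR (S j) / INR K * x) (INR (S j) / INR K * y))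
        (f (INR j / INR K * x) (INR j / INR K * y))).
      rewrite S_INR in *; lra. }
  specialize (Step K (le_n K)); replace (INR K / INR K) with 1 in Step by (field; lra).
  rewrite !Rmult_1_l in Step; exact Step.
Qed.

Section CompactSupport.

Variable eta : R -> R -> R.
Hypothesis Heta0 : forall x1 x2, 1 <= norm2 x1 x2 -> eta x1 x2 = 0.

Lemma partial_derivative_vanishes_outside (d1 : R -> R -> R) :
  (forall x1 x2, derivable_pt_lim (fun t => eta t x2) x1 (d1 x1 x2)) ->
  forall x1 x2, 1 < norm2 x1 x2 -> d1 x1 x2 = 0.
Proof.
  intros Hd x1 x2 Hn; apply (uniqueness_limite (fun t => eta t x2) x1); auto.
  intros eps Heps; exists (mkposreal (norm2 x1 x2 - 1) ltac:(lra)); simpl; intros h Hh0 Hh.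
  pose proof (norm2_triangle x1 x2 (x1 + h) x2) as T.
  replace (x1 - (x1 + h)) with (- h) in T by ring; rewrite Rminus_diag, Rabs_Ropp, Rabs_R0 in T.
  rewrite !Heta0 by lra; unfold Rminus.
  rewrite Rplus_opp_r, Rdiv_0_l, Rplus_0_l, Ropp_0, Rabs_R0; lra.
Qed.

Lemma partial_derivative_bounded (d1 : R -> R -> R) :
  (forall x1 x2, derivable_pt_lim (fun t => eta t x2) x1 (d1 x1 x2)) -> cont2 d1 ->
  exists B, 0 <= B /\ forall x1 x2, Rabs (d1 x1 x2) <= B.
Proof.
  intros Hd Hc.
  destruct (continuous_bounded_square d1 1 Rlt_0_1
    (fun x y _ _ => cont2_continuity_2d_pt d1 x y Hc)) as [B HB].
  exists (Rmax B 0); split; [apply Rmax_r|]; intros x1 x2.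
  destruct (Rle_dec (Rabs x1) 1); destruct (Rle_dec (Rabs x2) 1).
  - eapply Rle_trans; [apply HB; auto | apply Rmax_l].
  - rewrite (partial_derivative_vanishes_outside d1 Hd), Rabs_R0 by
      (pose proof (Rabs_le_norm2_r x1 x2); lra); apply Rmax_r.
  - rewrite (partial_derivative_vanishes_outside d1 Hd), Rabs_R0 by
      (pose proof (Rabs_le_norm2_l x1 x2); lra); apply Rmax_r.
  - rewrite (partial_derivative_vanishes_outside d1 Hd), Rabs_R0 by
      (pose proof (Rabs_le_norm2_l x1 x2); lra); apply Rmax_r.
Qed.

End CompactSupport.

Lemma C1_compact_support_lipschitz (eta : R -> R -> R) :
  C1_2 eta -> (forall x1 x2, 1 <= norm2 x1 x2 -> eta x1 x2 = 0) ->
  exists L, 0 <= L /\ forall p1 p2 q1 q2,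
    Rabs (eta p1 p2 - eta q1 q2) <= L * (Rabs (p1 - q1) + Rabs (p2 - q2)).
Proof.
  intros [d1 [d2 [Hd1 [Hd2 [C1 C2]]]]] Heta0.
  destruct (partial_derivative_bounded eta Heta0 d1 Hd1 C1) as [B1 [B1p HB1]].
  destruct (partial_derivative_bounded (fun a b => eta b a) 
    ltac:(intros; apply Heta0; rewrite norm2_sym; auto) (fun a b => d2 b a) (fun a b => Hd2 b a)
    ltac:(intros x1 x2 eps Heps; destruct (C2 x2 x1 eps Heps) as [del [Hdel H]];
          exists del; split; auto; intros; apply H; rewrite norm2_sym; auto))
    as [B2 [B2p HB2]].
  exists (Rmax B1 B2); split; [eapply Rle_trans; [apply B1p | apply Rmax_l]|].
  intros p1 p2 q1 q2.
  pose proof (lipschitz_of_bounded_derivative (fun t => eta t p2) (fun t => d1 t p2) B1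
    (fun x => Hd1 x p2) (fun x => HB1 x p2) q1 p1).
  pose proof (lipschitz_of_bounded_derivative (fun t => eta q1 t) (fun t => d2 q1 t) B2
    (fun x => Hd2 q1 x) (fun x => HB2 x q1) q2 p2).
  replace (eta p1 p2 - eta q1 q2) with ((eta p1 p2 - eta q1 p2) + (eta q1 p2 - eta q1 q2)) by ring.
  eapply Rle_trans; [apply Rabs_triang|].
  pose proof (Rmax_l B1 B2); pose proof (Rmax_r B1 B2).
  pose proof (Rabs_pos (p1 - q1)); pose proof (Rabs_pos (p2 - q2)); simpl in *; nra.
Qed.

Lemma sqrt3_bounds : 1.7 < sqrt 3 < 1.8.
Proof. pose proof (pow2_sqrt 3 ltac:(lra)); pose proof (sqrt_pos 3); split; nra. Qed.

Lemma IZR_abs_le_1 z : (-1 <= z <= 1)%Z -> Rabs (IZR z) <= 1.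
Proof. intros [H1 H2]; apply IZR_le in H1, H2; apply Rabs_le; lra. Qed.

Lemma dir_bounds k : (k <= 5)%nat -> Rabs (IZR (dirm k)) <= 1 /\ Rabs (IZR (dirn k)) <= 1.
Proof.
  intros Hk; split; apply IZR_abs_le_1; do 6 (destruct k as [|k]; [simpl; lia|]); lia.
Qed.

Lemma posx_step_le m n k : (k <= 5)%nat ->
  Rabs (posx (m + dirm k) (n + dirn k) - posx m n) <= 3 / 2.
Proof.
  intros Hk; destruct (dir_bounds k Hk) as [H1 H2]; unfold posx; rewrite !plus_IZR.
  replace (/ 2 + (IZR m + IZR (dirm k)) + (IZR n + IZR (dirn k)) / 2 - (/ 2 + IZR m + IZR n / 2))
    with (IZR (dirm k) + IZR (dirn k) * / 2) by field.
  eapply Rle_trans; [apply Rabs_triang|]; rewrite Rabs_mult, (Rabs_right (/ 2)) by lra; lra.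
Qed.

Lemma posy_step_le m n k : (k <= 5)%nat ->
  Rabs (posy (m + dirm k) (n + dirn k) - posy m n) <= 1.
Proof.
  intros Hk; destruct (dir_bounds k Hk) as [_ H2]; unfold posy; rewrite !plus_IZR.
  replace (sqrt 3 / 6 + (IZR n + IZR (dirn k)) * (sqrt 3 / 2) - (sqrt 3 / 6 + IZR n * (sqrt 3 / 2)))
    with (IZR (dirn k) * (sqrt 3 / 2)) by field.
  pose proof sqrt3_bounds; pose proof (Rabs_pos (IZR (dirn k))).
  rewrite Rabs_mult, (Rabs_right (sqrt 3 / 2)) by lra; nra.
Qed.

Lemma index_le_norm m n :
  Rabs (IZR m) + Rabs (IZR n) + 1 <= 4 * norm2 (posx m n) (posy m n) + 5.
Proof.
  pose proof (Rabs_le_norm2_l (posx m n) (posy m n)).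
  pose proof (Rabs_le_norm2_r (posx m n) (posy m n)).
  pose proof sqrt3_bounds.
  assert (Hn : Rabs (IZR n) * (sqrt 3 / 2) <= Rabs (posy m n) + 1).
  { rewrite <- (Rabs_right (sqrt 3 / 2)), <- Rabs_mult by lra.
    replace (IZR n * (sqrt 3 / 2)) with (posy m n + - (sqrt 3 / 6)) by (unfold posy; ring).
    eapply Rle_trans; [apply Rabs_triang|].
    rewrite Rabs_Ropp, (Rabs_right (sqrt 3 / 6)) by lra; lra. }
  assert (Hm : Rabs (IZR m) <= Rabs (posx m n) + 1 / 2 + Rabs (IZR n) / 2).
  { replace (IZR m) with (posx m n + - (/ 2 + IZR n * / 2)) by (unfold posx; field).
    eapply Rle_trans; [apply Rabs_triang|]; rewrite Rabs_Ropp.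
    eapply Rle_trans; [apply Rplus_le_compat_l, Rabs_triang|].
    rewrite Rabs_mult, !(Rabs_right (/ 2)) by lra; lra. }
  pose proof (Rabs_pos (IZR n)); nra.
Qed.

Lemma norm_le_box N m n : (Z.abs m <= Z.of_nat N)%Z -> (Z.abs n <= Z.of_nat N)%Z ->
  norm2 (posx m n) (posy m n) <= 3 * INR N + 2.
Proof.
  intros Hm Hn; eapply Rle_trans; [apply norm2_le_sum|].
  assert (Rabs (IZR m) <= INR N) by (rewrite INR_IZR_INZ, <- abs_IZR; apply IZR_le; lia).
  assert (Rabs (IZR n) <= INR N) by (rewrite INR_IZR_INZ, <- abs_IZR; apply IZR_le; lia).
  pose proof sqrt3_bounds; pose proof (Rabs_pos (IZR n)).
  assert (Rabs (posx m n) <= 1 / 2 + INR N + INR N / 2).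
  { unfold posx; eapply Rle_trans; [apply Rabs_triang|].
    eapply Rle_trans; [apply Rplus_le_compat_r, Rabs_triang|].
    unfold Rdiv; rewrite Rabs_mult, !(Rabs_right (/ 2)) by lra; lra. }
  assert (Rabs (posy m n) <= 1 / 2 + INR N).
  { unfold posy; eapply Rle_trans; [apply Rabs_triang|].
    rewrite (Rabs_right (sqrt 3 / 6)), Rabs_mult, (Rabs_right (sqrt 3 / 2)) by lra; nra. }
  lra.
Qed.

Lemma floorR_abs_le x : Rabs (IZR (floorR x)) <= Rabs x + 1.
Proof.
  unfold floorR; pose proof (base_Int_part x); apply Rabs_le.
  pose proof (Rle_abs x); pose proof (Rle_abs (- x)); rewrite Rabs_Ropp in *; lra.
Qed.

Lemma convex_combination_abs_le a b c A B C G :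
  0 <= a -> 0 <= b -> 0 <= c -> a + b + c = 1 ->
  Rabs A <= G -> Rabs B <= G -> Rabs C <= G -> Rabs (a * A + b * B + c * C) <= G.
Proof.
  intros; eapply Rle_trans; [apply Rabs_triang|].
  eapply Rle_trans; [apply Rplus_le_compat_r, Rabs_triang|].
  rewrite !Rabs_mult, (Rabs_right a), (Rabs_right b), (Rabs_right c) by lra; nra.
Qed.

Section Interpolant.

Variables (u : LFun) (C e : R).
Hypothesis He : 0 <= e.
Hypothesis Hgrowth : forall m n, Rabs (u m n) <= C + e * (Rabs (IZR m) + Rabs (IZR n) + 1).

Lemma interp_abs_le R0 x1 x2 : Rabs x1 <= R0 -> Rabs x2 <= R0 ->
  Rabs (interp u x1 x2) <= C + e * (4 * R0 + 9).
Proof.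
  intros Hx1 Hx2; unfold interp.
  set (t := (x2 - sqrt 3 / 6) / (sqrt 3 / 2)); set (s := x1 - / 2 - t / 2).
  pose proof sqrt3_bounds.
  assert (Ht : Rabs t <= 2 * R0 + 2).
  { assert (E : t * (sqrt 3 / 2) = x2 - sqrt 3 / 6) by (unfold t; field; lra).
    assert (Hx : Rabs (x2 - sqrt 3 / 6) <= R0 + 1).
    { unfold Rminus; eapply Rle_trans; [apply Rabs_triang|].
      rewrite Rabs_Ropp, (Rabs_right (sqrt 3 / 6)) by lra; lra. }
    rewrite <- E, Rabs_mult, (Rabs_right (sqrt 3 / 2)) in Hx by lra.
    pose proof (Rabs_pos t); nra. }
  assert (Hs : Rabs s <= 2 * R0 + 2).
  { unfold s; replace (x1 - / 2 - t / 2) with (x1 + - (/ 2 + t * / 2)) by field.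
    eapply Rle_trans; [apply Rabs_triang|]; rewrite Rabs_Ropp.
    eapply Rle_trans; [apply Rplus_le_compat_l, Rabs_triang|].
    rewrite Rabs_mult, !(Rabs_right (/ 2)) by lra; lra. }
  pose proof (floorR_abs_le s) as Fs; pose proof (floorR_abs_le t) as Ft.
  set (m := floorR s) in *; set (n := floorR t) in *.
  assert (Hv : forall dm dn, (0 <= dm <= 1)%Z -> (0 <= dn <= 1)%Z ->
    Rabs (u (m + dm)%Z (n + dn)%Z) <= C + e * (4 * R0 + 9)).
  { intros dm dn Hdm Hdn; eapply Rle_trans; [apply Hgrowth|].
    apply Rplus_le_compat_l, Rmult_le_compat_l; auto; rewrite !plus_IZR.
    pose proof (Rabs_triang (IZR m) (IZR dm)); pose proof (Rabs_triang (IZR n) (IZR dn)).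
    pose proof (IZR_abs_le_1 dm ltac:(lia)); pose proof (IZR_abs_le_1 dn ltac:(lia)); lra. }
  pose proof (Hv 0%Z 0%Z ltac:(lia) ltac:(lia)); pose proof (Hv 1%Z 0%Z ltac:(lia) ltac:(lia)).
  pose proof (Hv 0%Z 1%Z ltac:(lia) ltac:(lia)); pose proof (Hv 1%Z 1%Z ltac:(lia) ltac:(lia)).
  rewrite !Z.add_0_r in *.
  assert (0 <= s - IZR m < 1) by (unfold m, floorR; pose proof (base_Int_part s); lra).
  assert (0 <= t - IZR n < 1) by (unfold n, floorR; pose proof (base_Int_part t); lra).
  destruct Rle_dec.
  - replace (u m n + (s - IZR m) * (u (m + 1)%Z n - u m n) + (t - IZR n) * (u m (n + 1)%Z - u m n))
      with ((1 - (s - IZR m) - (t - IZR n)) * u m n + (s - IZR m) * u (m + 1)%Z n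
            + (t - IZR n) * u m (n + 1)%Z) by ring.
    apply convex_combination_abs_le; auto; lra.
  - replace (u (m + 1)%Z (n + 1)%Z + (1 - (s - IZR m)) * (u m (n + 1)%Z - u (m + 1)%Z (n + 1)%Z)
             + (1 - (t - IZR n)) * (u (m + 1)%Z n - u (m + 1)%Z (n + 1)%Z))
      with (((s - IZR m) + (t - IZR n) - 1) * u (m + 1)%Z (n + 1)%Z
            + (1 - (s - IZR m)) * u m (n + 1)%Z + (1 - (t - IZR n)) * u (m + 1)%Z n) by ring.
    apply convex_combination_abs_le; auto; lra.
Qed.

End Interpolant.

Lemma RInt_abs_le f a b M : a <= b -> 0 <= M -> (forall x, a <= x <= b -> Rabs (f x) <= M) ->
  Rabs (RInt f a b) <= M * (b - a).
Proof.
  intros Hab HM Hf; unfold RInt.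
  destruct excluded_middle_informative as [Hi|]; [|rewrite Rabs_R0; nra].
  destruct (constructive_indefinite_description _ Hi) as [pr ?]; simpl.
  pose proof (RiemannInt_P19 pr (RiemannInt_P14 a b M) Hab) as Up.
  pose proof (RiemannInt_P19 (RiemannInt_P14 a b (- M)) pr Hab) as Down.
  rewrite RiemannInt_P15 in Up, Down; unfold fct_cte in Up, Down.
  apply Rabs_le; split.
  - enough (- M * (b - a) <= RiemannInt pr) by lra.
    apply Down; intros x Hx; pose proof (Rabs_le_between _ _ (Hf x ltac:(lra))); lra.
  - apply Up; intros x Hx; pose proof (Rabs_le_between _ _ (Hf x ltac:(lra))); lra.
Qed.

Lemma aR_abs_le (u : LFun) C e R0 : 0 <= e -> 0 <= C -> 6 <= R0 ->
  (forall m n, Rabs (u m n) <= C + e * (Rabs (IZR m) + Rabs (IZR n) + 1)) ->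
  Rabs (aR u R0) <= 3 * (C + e * (4 * R0 + 9)).
Proof.
  intros He HC HR Hg; unfold aR.
  set (G := C + e * (4 * R0 + 9)); set (area := PI * (R0 ^ 2 - (R0 / 2 + 1) ^ 2)).
  assert (HG : 0 <= G) by (unfold G; nra).
  assert (Harea : 4 * R0 ^ 2 <= 3 * area).
  { pose proof PI2_3_2; unfold area.
    assert (3 * (R0 ^ 2 - (R0 / 2 + 1) ^ 2) <= PI * (R0 ^ 2 - (R0 / 2 + 1) ^ 2))
      by (apply Rmult_le_compat_r; nra); nra. }
  assert (Hint : Rabs (RInt (fun x1 => RInt (fun x2 => indA R0 x1 x2 * interp u x1 x2) (- R0) R0)
    (- R0) R0) <= (G * (R0 - - R0)) * (R0 - - R0)).
  { apply RInt_abs_le; [lra | nra |]; intros x1 Hx1.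
    apply RInt_abs_le; [lra | auto |]; intros x2 Hx2.
    assert (Rabs (indA R0 x1 x2) <= 1)
      by (unfold indA; repeat destruct Rlt_dec; repeat destruct Rle_dec;
          rewrite ?Rabs_R1, ?Rabs_R0; lra).
    pose proof (interp_abs_le u C e He Hg R0 x1 x2
      ltac:(apply Rabs_le; lra) ltac:(apply Rabs_le; lra)) as Hi.
    fold G in Hi; rewrite Rabs_mult; pose proof (Rabs_pos (indA R0 x1 x2)); nra. }
  unfold Rdiv; rewrite Rabs_mult, (Rabs_right (/ area)) by (left; apply Rinv_0_lt_compat; nra).
  apply Rmult_le_reg_r with area; [nra|]; rewrite Rmult_assoc, Rinv_l by nra; nra.
Qed.

Section Truncation.

Variables (eta : R -> R -> R) (L : R).
Hypothesis HL0 : 0 <= L.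
Hypothesis HL : forall p1 p2 q1 q2,
  Rabs (eta p1 p2 - eta q1 q2) <= L * (Rabs (p1 - q1) + Rabs (p2 - q2)).
Hypothesis Heta1 : forall x1 x2, norm2 x1 x2 <= 3 / 4 -> eta x1 x2 = 1.
Hypothesis Heta0 : forall x1 x2, 1 <= norm2 x1 x2 -> eta x1 x2 = 0.

Lemma cutoff_abs_le p1 p2 : Rabs (eta p1 p2) <= 4 * L.
Proof.
  destruct (Rle_dec 1 (norm2 p1 p2)); [rewrite Heta0, Rabs_R0 by auto; lra|].
  pose proof (HL p1 p2 2 0) as H; rewrite (Heta0 2 0), Rminus_0_r, Rminus_0_r in H
    by (unfold norm2; replace (2 * 2 + 0 * 0) with (2 ^ 2) by ring; rewrite sqrt_pow2; lra).
  pose proof (Rabs_le_norm2_l p1 p2); pose proof (Rabs_le_norm2_r p1 p2).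
  assert (Rabs (p1 - 2) <= 3)
    by (unfold Rminus; eapply Rle_trans;
        [apply Rabs_triang | rewrite Rabs_Ropp, (Rabs_right 2); lra]).
  nra.
Qed.

Variables (u : LFun) (R0 : R).
Hypothesis HR : 2 < R0.

Lemma cutoff_scaled_step_le m n k : (k <= 5)%nat ->
  Rabs (eta (posx (m + dirm k) (n + dirn k) / R0) (posy (m + dirm k) (n + dirn k) / R0)
        - eta (posx m n / R0) (posy m n / R0)) <= 3 * L / R0.
Proof.
  intros Hk; eapply Rle_trans; [apply HL|].
  rewrite <- !Rdiv_minus_distr; unfold Rdiv; rewrite !Rabs_mult.
  rewrite (Rabs_right (/ R0)) by (left; apply Rinv_0_lt_compat; lra).
  pose proof (posx_step_le m n k Hk); pose proof (posy_step_le m n k Hk).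
  pose proof (Rinv_0_lt_compat R0 ltac:(lra)) as HR'.
  pose proof (Rmult_le_pos _ _ HL0 (Rlt_le _ _ HR')); nra.
Qed.

Lemma cutoff_scaled_eq_1 x y : norm2 x y <= 3 * R0 / 4 -> eta (x / R0) (y / R0) = 1.
Proof.
  intros H; apply Heta1; rewrite norm2_scale by lra.
  apply Rmult_le_reg_r with R0; [lra|]; unfold Rdiv; rewrite Rmult_assoc, Rinv_l; lra.
Qed.

Lemma cutoff_scaled_eq_0 x y : R0 <= norm2 x y -> eta (x / R0) (y / R0) = 0.
Proof.
  intros H; apply Heta0; rewrite norm2_scale by lra.
  apply Rmult_le_reg_r with R0; [lra|]; unfold Rdiv; rewrite Rmult_assoc, Rinv_l; lra.
Qed.

Lemma truncation_error_le C e T m n k :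
  0 <= e -> 0 <= C -> 0 <= T -> (k <= 5)%nat ->
  (forall m n, Rabs (u m n) <= C + e * (Rabs (IZR m) + Rabs (IZR n) + 1)) ->
  (forall m n k, (k <= 5)%nat -> 3 * R0 / 4 < norm2 (posx m n) (posy m n) ->
     Rabs (Dif u m n k) <= T) ->
  Rabs (Dif (PiR eta u R0) m n k - Dif u m n k) <=
    (1 + 4 * L) * T + 3 * L / R0 * (C + e * (4 * R0 + 15) + Rabs (aR u R0)).
Proof.
  intros He HC HT0 Hk Hg HT.
  set (m' := (m + dirm k)%Z); set (n' := (n + dirn k)%Z).
  set (X := posx m n); set (Y := posy m n); set (X' := posx m' n'); set (Y' := posy m' n').
  set (ex := eta (X / R0) (Y / R0)); set (ey := eta (X' / R0) (Y' / R0)).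
  replace (Dif (PiR eta u R0) m n k - Dif u m n k)
    with ((ex - 1) * Dif u m n k + (ey - ex) * (u m' n' - aR u R0))
    by (unfold Dif, PiR; fold m' n' X Y X' Y' ex ey; ring).
  eapply Rle_trans; [apply Rabs_triang|]; apply Rplus_le_compat.
  - destruct (Rle_dec (norm2 X Y) (3 * R0 / 4)).
    + unfold ex; rewrite cutoff_scaled_eq_1, Rminus_diag, Rmult_0_l, Rabs_R0 by auto; nra.
    + rewrite Rabs_mult; pose proof (HT m n k Hk ltac:(fold X Y; lra)).
      assert (Rabs (ex - 1) <= 1 + 4 * L)
        by (unfold Rminus; eapply Rle_trans; [apply Rabs_triang|];
            rewrite Rabs_Ropp, Rabs_R1;
            pose proof (cutoff_abs_le (X / R0) (Y / R0)) as Hb; fold ex in Hb; lra).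
      apply Rmult_le_compat; auto using Rabs_pos.
  - assert (Hstep : Rabs (ey - ex) <= 3 * L / R0) by apply (cutoff_scaled_step_le m n k Hk).
    destruct (Rle_dec R0 (norm2 X Y)); [destruct (Rle_dec R0 (norm2 X' Y'))|].
    + unfold ex, ey; rewrite !cutoff_scaled_eq_0, Rminus_diag, Rmult_0_l, Rabs_R0 by auto.
      apply Rmult_le_pos; [apply Rmult_le_pos; [lra | left; apply Rinv_0_lt_compat; lra]|].
      pose proof (Rabs_pos (aR u R0)); nra.
    + assert (Rabs (u m' n' - aR u R0) <= C + e * (4 * R0 + 15) + Rabs (aR u R0)).
      { unfold Rminus; eapply Rle_trans; [apply Rabs_triang|]; rewrite Rabs_Ropp.
        pose proof (Hg m' n'); pose proof (index_le_norm m' n') as Hi; fold X' Y' in Hi; nra. }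
      rewrite Rabs_mult; apply Rmult_le_compat; auto using Rabs_pos.
    + assert (norm2 X' Y' <= R0 + 5 / 2)
        by (pose proof (norm2_triangle X' Y' X Y); pose proof (posx_step_le m n k Hk) as Hx;
            pose proof (posy_step_le m n k Hk) as Hy; fold m' n' X Y X' Y' in Hx, Hy; lra).
      assert (Rabs (u m' n' - aR u R0) <= C + e * (4 * R0 + 15) + Rabs (aR u R0)).
      { unfold Rminus; eapply Rle_trans; [apply Rabs_triang|]; rewrite Rabs_Ropp.
        pose proof (Hg m' n'); pose proof (index_le_norm m' n') as Hi; fold X' Y' in Hi; nra. }
      rewrite Rabs_mult; apply Rmult_le_compat; auto using Rabs_pos.
Qed.

End Truncation.

Definition bond_values (f : Z -> Z -> nat -> R) (x : R) : Prop :=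
  exists m n k, (k <= 5)%nat /\ x = Rabs (f m n k).

Lemma bond_values_inhabited f : exists x, bond_values f x.
Proof. exists (Rabs (f 0%Z 0%Z 0%nat)), 0%Z, 0%Z, 0%nat; split; [lia | reflexivity]. Qed.

(* [0] when the bond values are unbounded. *)
Definition bond_sup (f : Z -> Z -> nat -> R) : R :=
  match excluded_middle_informative (bound (bond_values f)) with
  | left H => proj1_sig (completeness _ H (bond_values_inhabited f))
  | right _ => 0
  end.

Lemma bond_sup_ge f m n k : bound (bond_values f) -> (k <= 5)%nat -> Rabs (f m n k) <= bond_sup f.
Proof.
  intros Hb Hk; unfold bond_sup; destruct excluded_middle_informative; [|contradiction].
  destruct completeness as [x [Hub ?]]; simpl; apply Hub; exists m, n, k; auto.
Qed.

Lemma bond_sup_le f M : (forall m n k, (k <= 5)%nat -> Rabs (f m n k) <= M) -> bond_sup f <= M.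
Proof.
  intros H; unfold bond_sup; destruct excluded_middle_informative as [Hb|Hb].
  - destruct completeness as [x [? Hleast]]; simpl.
    apply Hleast; intros y [m [n [k [Hk ->]]]]; auto.
  - exfalso; apply Hb; exists M; intros y [m [n [k [Hk ->]]]]; auto.
Qed.

Lemma bond_sup_nonneg f : 0 <= bond_sup f.
Proof.
  destruct (classic (bound (bond_values f))) as [Hb|Hb].
  - eapply Rle_trans; [apply Rabs_pos | apply (bond_sup_ge f 0 0 0 Hb); lia].
  - unfold bond_sup; destruct excluded_middle_informative; [contradiction | lra].
Qed.

Lemma Dif_add_lf_sub y z w m n k :
  Dif (add_lf y z) m n k - Dif (add_lf y w) m n k = Dif z m n k - Dif w m n k.
Proof. unfold Dif, add_lf; ring. Qed.

Lemma hess_lower_bound psi2 K y1 y2 v delta :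
  (forall a b, Rabs (psi2 b - psi2 a) <= K * Rabs (b - a)) -> 0 <= K -> in_W0 v ->
  (forall m n k, (k <= 5)%nat -> Rabs (Dif y2 m n k - Dif y1 m n k) <= delta) ->
  hess psi2 y1 v v - K * delta * Dnorm2 v <= hess psi2 y2 v v.
Proof.
  intros HK HK0 [_ [N HN]] Hdelta.
  assert (Hout : forall m n k, (k <= 5)%nat -> outside (Z.to_nat N) m n -> Dif v m n k = 0)
    by (intros m n k Hk Ho; apply HN; auto; unfold outside in Ho; lia).
  unfold hess, Dnorm2.
  rewrite !(bsum_finite_support _ (Z.to_nat N)) by (intros m n k Hk Ho; rewrite Hout by auto; ring).
  rewrite <- bond_box_sum_minus_scal; apply bond_box_sum_le; intros m n k Hk.
  pose proof (Rabs_le_between _ _ (Rle_trans _ _ _ (HK (Dif y1 m n k) (Dif y2 m n k))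
    (Rmult_le_compat_l K _ _ HK0 (Hdelta m n k Hk)))).
  pose proof (pow2_ge_0 (Dif v m n k)); simpl; nra.
Qed.

Definition truncation_defect (eta : R -> R -> R) (u : LFun) (R0 : R) : R :=
  bond_sup (fun m n k => Dif (PiR eta u R0) m n k - Dif u m n k).

Section TruncationDefect.

Variables (eta : R -> R -> R) (L : R).
Hypothesis HL0 : 0 <= L.
Hypothesis HL : forall p1 p2 q1 q2,
  Rabs (eta p1 p2 - eta q1 q2) <= L * (Rabs (p1 - q1) + Rabs (p2 - q2)).
Hypothesis Heta1 : forall x1 x2, norm2 x1 x2 <= 3 / 4 -> eta x1 x2 = 1.
Hypothesis Heta0 : forall x1 x2, 1 <= norm2 x1 x2 -> eta x1 x2 = 0.
Variables (u : LFun) (l : R).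
Hypothesis Hu0 : u 0%Z (-1)%Z = 0.
Hypothesis Hl : Un_cv (bond_box_sum (fun m n k => Dif u m n k ^ 2)) l.

Lemma truncation_defect_bounded R0 : 2 < R0 ->
  bound (bond_values (fun m n k => Dif (PiR eta u R0) m n k - Dif u m n k)).
Proof.
  intros HR; destruct (sublinear_growth u l Hu0 Hl 1 Rlt_0_1) as [C [HC Hg]].
  eexists; intros x [m [n [k [Hk ->]]]].
  apply (truncation_error_le eta L HL0 HL Heta1 Heta0 u R0 HR C 1 (sqrt l));
    auto using sqrt_pos; try lra.
  intros; apply (Dif_bound u l Hl); auto.
Qed.

Lemma truncation_defect_ge R0 (y : LFun) m n k : 2 < R0 -> (k <= 5)%nat ->
  Rabs (Dif (add_lf y (PiR eta u R0)) m n k - Dif (add_lf y u) m n k)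
    <= truncation_defect eta u R0.
Proof.
  intros HR Hk; rewrite Dif_add_lf_sub.
  apply (bond_sup_ge (fun m n k => Dif (PiR eta u R0) m n k - Dif u m n k)); auto.
  apply truncation_defect_bounded, HR.
Qed.

Lemma truncation_defect_vanishes tau : 0 < tau ->
  exists R1, forall R0, R1 < R0 -> truncation_defect eta u R0 <= tau.
Proof.
  intros Htau.
  set (e := tau / (2 * (1 + 73 * L))).
  assert (He : 0 < e) by (unfold e; apply Rdiv_lt_0_compat; lra).
  assert (Ee : (1 + 73 * L) * e = tau / 2) by (unfold e; field; lra).
  clearbody e.
  destruct (Dif_tail u l Hl e He) as [N HN].
  destruct (sublinear_growth u l Hu0 Hl e He) as [C [HC Hg]].
  assert (HCt : 0 <= 24 * L * C / tau)
    by (apply Rmult_le_pos; [nra | left; apply Rinv_0_lt_compat; lra]).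
  exists (6 + 4 * INR N + 24 * L * C / tau); intros R0 HR0; pose proof (pos_INR N).
  apply bond_sup_le; intros m n k Hk.
  eapply Rle_trans.
  { apply (truncation_error_le eta L HL0 HL Heta1 Heta0 u R0 ltac:(lra) C e e); auto; try lra.
    intros m0 n0 k0 Hk0 Hfar; apply HN; auto; apply NNPP; intros Hin.
    assert (norm2 (posx m0 n0) (posy m0 n0) <= 3 * INR N + 2)
      by (apply norm_le_box; unfold outside in Hin; lia); lra. }
  pose proof (aR_abs_le u C e R0 ltac:(lra) HC ltac:(lra) Hg) as Ha.
  set (q := 3 * L / R0).
  assert (Hq : q * R0 = 3 * L) by (unfold q; field; lra).
  assert (Hq0 : 0 <= q)
    by (unfold q; apply Rmult_le_pos; [lra | left; apply Rinv_0_lt_compat; lra]).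
  clearbody q.
  assert (Hq6 : 6 * q <= 3 * L) by nra.
  assert (HqC : 4 * q * C <= tau / 2).
  { apply Rmult_le_reg_r with R0; [lra|].
    replace (4 * q * C * R0) with (4 * C * (q * R0)) by ring; rewrite Hq.
    assert (24 * L * C / tau * tau = 24 * L * C) by (field; lra); nra. }
  assert (Hbound : q * (C + e * (4 * R0 + 15) + Rabs (aR u R0))
                   <= q * (4 * C + 16 * e * R0 + 42 * e))
    by (apply Rmult_le_compat_l; [lra | nra]).
  replace (q * (4 * C + 16 * e * R0 + 42 * e)) with (4 * q * C + 16 * e * (q * R0) + 42 * e * q)
    in Hbound by ring.
  rewrite Hq in Hbound; nra.
Qed.

End TruncationDefect.

Lemma sub_vanishing_converges (lam K : R) (delta : R -> R) :
  0 <= K -> (forall R0, 0 <= delta R0) ->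
  (forall tau, 0 < tau -> exists R1, forall R0, R1 < R0 -> delta R0 <= tau) ->
  forall eps, 0 < eps -> exists R1, forall R0, R1 < R0 -> Rabs (lam - K * delta R0 - lam) < eps.
Proof.
  intros HK Hpos Hlim eps Heps.
  destruct (Hlim (eps / (K + 1))) as [R1 HR1]; [apply Rdiv_lt_0_compat; lra|].
  exists R1; intros R0 HR0; specialize (HR1 R0 HR0); pose proof (Hpos R0).
  replace (lam - K * delta R0 - lam) with (- (K * delta R0)) by ring.
  rewrite Rabs_Ropp, Rabs_right by nra.
  assert (K * (eps / (K + 1)) < eps)
    by (apply Rmult_lt_reg_r with (K + 1); [lra|]; field_simplify; nra).
  nra.
Qed.

Theorem mainTheorem7
  (psi psi1 psi2 psi3 psi4 : R -> R)
  (Hd1 : forall x, derivable_pt_lim psi x (psi1 x))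
  (Hd2 : forall x, derivable_pt_lim psi1 x (psi2 x))
  (Hd3 : forall x, derivable_pt_lim psi2 x (psi3 x))
  (Hd4 : forall x, derivable_pt_lim psi3 x (psi4 x))
  (Hc4 : forall x, continuity_pt psi4 x)
  (Hper : forall x, psi (x + 1) = psi x)
  (Heven : forall x, psi (- x) = psi x)
  (lambda_d : R) (Hlam : 0 < lambda_d)
  (u : LFun) (Hu : in_W12 u)
  (Hmin : exists eps, 0 < eps /\ forall w, in_W0 w -> sqrt (Dnorm2 w) < eps ->
            0 <= Ediff psi (add_lf (add_lf yhat_lat u) w) (add_lf yhat_lat u))
  (Hstab : forall v, in_W0 v ->
            lambda_d * Dnorm2 v <= hess psi2 (add_lf yhat_lat u) v v)
  (eta : R -> R -> R) (Heta : C1_2 eta)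
  (Heta1 : forall x1 x2, norm2 x1 x2 <= 3 / 4 -> eta x1 x2 = 1)
  (Heta0 : forall x1 x2, 1 <= norm2 x1 x2 -> eta x1 x2 = 0) :
  exists lam : R -> R,
    (forall R0, 2 < R0 -> forall v, in_W0 v ->
        lam R0 * Dnorm2 v <= hess psi2 (add_lf yhat_lat (PiR eta u R0)) v v) /\
    (forall eps, 0 < eps -> exists R1, forall R0, R1 < R0 ->
        Rabs (lam R0 - lambda_d) < eps).
Proof.
  destruct Hu as [Hu0 [l Hl]]; unfold xi0m, xi0n in Hu0.
  destruct (periodic_second_derivative_lipschitz psi psi1 psi2 psi3 Hper Hd1 Hd2 Hd3
    (fun x => derivable_continuous_pt psi3 x (exist _ (psi4 x) (Hd4 x)))) as [K [HK0 HK]].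
  destruct (C1_compact_support_lipschitz eta Heta Heta0) as [L [HL0 HL]].
  exists (fun R0 => lambda_d - K * truncation_defect eta u R0); split.
  - intros R0 HR v Hv; cbv beta.
    pose proof (hess_lower_bound psi2 K _ _ v _ HK HK0 Hv
      (fun m n k => truncation_defect_ge eta L HL0 HL Heta1 Heta0 u l Hu0 Hl R0 yhat_lat m n k HR)).
    specialize (Hstab v Hv); lra.
  - apply sub_vanishing_converges; auto.
    + intros R0; apply bond_sup_nonneg.
    + exact (truncation_defect_vanishes eta L HL0 HL Heta1 Heta0 u l Hu0 Hl).
Qed.
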